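(* Let $G=(V,E)$ be a temporal graph, $s\in V$, $t_s\in\mathbb{R}$, and $T$ the DFS tree produced by DFS-v2 on $G$ from $s$ with starting time $t_s$. Let $t_x\le t_y$ with $t_x\ge t_s$, let $v\neq s$, and let $O(v)$ be the set of occurrences of $v$ in $T$. Let $O'(v)=\{v_o\in O(v): t_{start}(v_o)\ge t_x,\ t_{end}(v_o)\le t_y\}$. If $O'(v)\neq\emptyset$ and $v_{\min}\in O'(v)$ minimizes $t_{end}(v_o)-t_{start}(v_o)$ over $O'(v)$, then the tree path from the root to $v_{\min}$ is a fastest path from $s$ to $v$ within $[t_x,t_y]$: it is a temporal path $P$ from $s$ to $v$ with $t_x\le t_{start}(P)$, $t_{end}(P)\le t_y$, and $t_{end}(P)-t_{start}(P)\le t_{end}(P')-t_{start}(P')$ for every temporal path $P'$ from $s$ to $v$ with $t_x\le t_{start}(P')$ and $t_{end}(P')\le t_y$. If $O'(v)=\emptyset$, then no temporal path $P'$ from $s$ to $v$ with $t_x\le t_{start}(P')$ and $t_{end}(P')\le t_y$ exists.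
   Context: A temporal graph is a pair $G=(V,E)$ where $V$ is a finite set of vertices and $E$ is a finite set of temporal edges, i.e. triples $(u,v,t)$ with $u,v\in V$, $u\neq v$, $t\in\mathbb{R}$ (the time at which the edge is active); distinct elements of $E$ are distinct triples. A temporal path from $x$ to $y$ is a sequence $P=\langle (w_1,w_2,t_1),\dots,(w_k,w_{k+1},t_k)\rangle$ of $k\ge1$ edges of $E$ with $w_1=x$, $w_{k+1}=y$ and $t_1\le t_2\le\dots\le t_k$; $t_{start}(P)=t_1$, $t_{end}(P)=t_k$. Temporal DFS-v2. The procedure maintains a value $\sigma(x)\in\mathbb{R}\cup\{\infty\}$ for every $x\in V$, initially $\infty$, and a set of already traversed edges, initially empty, and builds a rooted tree $T$ whose nodes are occurrences of vertices of $G$ (a vertex may occur several times). Each occurrence carries a label, namely the value assigned to $\sigma(x)$ when that occurrence was created. Start: create the root occurrence of $s$, set $\sigma(s)=t_s$, and make it current. Step (a): let $u$ be the vertex of the current occurrence, $\sigma_u$ its label, and $A$ the set of edges $(u,v,t)\in E$ not yet traversed with $\sigma_u\le t$. If $A=\emptyset$: if the current occurrence is the root, terminate; otherwise make its parent current and repeat step (a). If $A\neq\emptyset$, select an edge $e=(u,v,t)\in A$ with the largest time $t$ (ties arbitrary), mark it traversed and go to step (b). Step (b): if the current value $\sigma(v)>t$, create a new occurrence of $v$ as a child of the current occurrence joined by the tree edge $e$, set $\sigma(v):=t$ (its label), make it current and go to (a); otherwise go to (a) with the same current occurrence. Active interval: for a non-root occurrence $v_o$ of $T$, the tree edges on the path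 from the root to $v_o$ form a sequence $\langle (s=w_1,w_2,t_1),\dots,(w_k,w_{k+1}=v,t_k)\rangle$; set $t_{start}(v_o)=t_1$ and $t_{end}(v_o)=t_k$. *)

From Stdlib Require Import Reals List Relations.
Import ListNotations.
Open Scope R_scope.
Set Implicit Arguments.

Definition tedge (V : Type) : Type := (V * V * R)%type.
Definition esrc {V : Type} (e : tedge V) : V := fst (fst e).
Definition etgt {V : Type} (e : tedge V) : V := snd (fst e).
Definition etime {V : Type} (e : tedge V) : R := snd e.

Fixpoint is_tpath {V : Type} (E : list (tedge V)) (x y : V) (P : list (tedge V)) : Prop :=
  match P with
  | [] => False
  | [e] => In e E /\ esrc e = x /\ etgt e = y
  | e :: ((e' :: _) as P') =>
      In e E /\ esrc e = x /\ etime e <= etime e' /\ is_tpath E (etgt e) y P'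
  end.

Definition t_start {V : Type} (P : list (tedge V)) : R :=
  match P with [] => 0 | e :: _ => etime e end.

Fixpoint t_end {V : Type} (P : list (tedge V)) : R :=
  match P with
  | [] => 0
  | [e] => etime e
  | _ :: P' => t_end P'
  end.

(* Occurrences (nodes of the DFS tree T): vertex, label, and (for non-root
   occurrences) the parent index together with the joining tree edge. *)
Record occurrence (V : Type) := mkOcc {
  o_vtx : V;
  o_label : R;
  o_parent : option (nat * tedge V)
}.

(* State of DFS-v2.  sigma x = None encodes sigma(x) = infinity.
   Occurrences are stored in a list, indexed by creation order; the root is
   the occurrence with no parent (index 0). *)
Record dfs_state (V : Type) := mkState {
  st_sigma : V -> option R;
  st_trav : list (tedge V);
  st_nodes : list (occurrence V);
  st_cur : nat
}.

Definition sigma_gt (o : option R) (t : R) : Prop :=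
  match o with None => True | Some s => t < s end.

(* e belongs to the set A of step (a) for current vertex u with label lab *)
Definition available {V : Type} (E : list (tedge V)) (st : dfs_state V)
  (u : V) (lab : R) (e : tedge V) : Prop :=
  In e E /\ ~ In e (st_trav st) /\ esrc e = u /\ lab <= etime e.

(* One step of DFS-v2 (nondeterministic in the choice among ties). *)
Inductive dfs_step {V : Type} (E : list (tedge V)) : dfs_state V -> dfs_state V -> Prop :=
| step_new : forall st o e (sigma' : V -> option R),
    nth_error (st_nodes st) (st_cur st) = Some o ->
    available E st (o_vtx o) (o_label o) e ->
    (forall e', available E st (o_vtx o) (o_label o) e' -> etime e' <= etime e) ->
    sigma_gt (st_sigma st (etgt e)) (etime e) ->
    sigma' (etgt e) = Some (etime e) ->
    (forall x, x <> etgt e -> sigma' x = st_sigma st x) ->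
    dfs_step E st
      (mkState sigma' (e :: st_trav st)
         (st_nodes st ++ [mkOcc (etgt e) (etime e) (Some (st_cur st, e))])
         (length (st_nodes st)))
| step_skip : forall st o e,
    nth_error (st_nodes st) (st_cur st) = Some o ->
    available E st (o_vtx o) (o_label o) e ->
    (forall e', available E st (o_vtx o) (o_label o) e' -> etime e' <= etime e) ->
    ~ sigma_gt (st_sigma st (etgt e)) (etime e) ->
    dfs_step E st
      (mkState (st_sigma st) (e :: st_trav st) (st_nodes st) (st_cur st))
| step_back : forall st o p e,
    nth_error (st_nodes st) (st_cur st) = Some o ->
    (forall e', ~ available E st (o_vtx o) (o_label o) e') ->
    o_parent o = Some (p, e) ->
    dfs_step E st (mkState (st_sigma st) (st_trav st) (st_nodes st) p).

Definition dfs_init {V : Type} (s : V) (ts : R) (st : dfs_state V) : Prop :=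
  st_sigma st s = Some ts /\ (forall x, x <> s -> st_sigma st x = None) /\
  st_trav st = [] /\ st_nodes st = [mkOcc s ts None] /\ st_cur st = 0%nat.

Definition dfs_terminal {V : Type} (E : list (tedge V)) (st : dfs_state V) : Prop :=
  exists o, nth_error (st_nodes st) (st_cur st) = Some o /\ o_parent o = None /\
    (forall e', ~ available E st (o_vtx o) (o_label o) e').

Definition dfs_run {V : Type} (E : list (tedge V)) (s : V) (ts : R) (st : dfs_state V) : Prop :=
  exists st0, dfs_init s ts st0 /\ clos_refl_trans _ (dfs_step E) st0 st /\ dfs_terminal E st.

Inductive tree_path {V : Type} (nodes : list (occurrence V)) : nat -> list (tedge V) -> Prop :=
| tp_root : forall i o, nth_error nodes i = Some o -> o_parent o = None -> tree_path nodes i []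
| tp_child : forall i o p e P, nth_error nodes i = Some o -> o_parent o = Some (p, e) ->
    tree_path nodes p P -> tree_path nodes i (P ++ [e]).

Definition in_window {V : Type} (st : dfs_state V) (v : V) (tx ty : R) (i : nat)
  (P : list (tedge V)) : Prop :=
  (exists o, nth_error (st_nodes st) i = Some o /\ o_vtx o = v) /\
  tree_path (st_nodes st) i P /\ tx <= t_start P /\ t_end P <= ty.

(* The proof is an invariant argument over the run of DFS-v2.  We show that
   every reachable state satisfies [Inv]: besides structural facts about the
   tree (parent edges are graph edges, labels are arrival times, ...), [Inv]
   records that (1) every occurrence is either finished, i.e. all its usable
   out-edges are traversed, or an ancestor of the current occurrence, (2) the
   current branch has the earliest start time of all branches, and (3) every
   traversed edge e leaving an occurrence i "is reflected in the tree": its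
   head is reached by a branch starting no earlier than the branch of i and
   arriving no later than the time of e.  At termination every occurrence is
   finished, so by induction along an arbitrary temporal path P' from s to v
   the tree contains an occurrence of v whose branch starts no earlier and
   ends no later than P' ([window_path_dominated]).  Both halves of the
   theorem follow: a minimal occurrence of O'(v) is at least as fast as any
   window path, and a window path forces O'(v) to be nonempty. *)
From Stdlib Require Import Reals List Relations Lra Lia Classical.
Import ListNotations.
Open Scope R_scope.

Lemma nth_error_snoc_inv {A : Type} (l : list A) a i x :
  nth_error (l ++ [a]) i = Some x -> nth_error l i = Some x \/ (i = length l /\ x = a).
Proof.
  intros H. destruct (Nat.lt_ge_cases i (length l)) as [Hlt|Hge].
  - left. rewrite nth_error_app1 in H; auto.
  - right. rewrite nth_error_app2 in H by auto.
    destruct (i - length l)%nat eqn:Hd; simpl in H.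
    + injection H as <-. split; auto. lia.
    + destruct n; discriminate.
Qed.

Lemma nth_error_app_l {A : Type} (l m : list A) i x :
  nth_error l i = Some x -> nth_error (l ++ m) i = Some x.
Proof.
  intros H. rewrite nth_error_app1; auto. apply nth_error_Some. congruence.
Qed.

Lemma nth_error_snoc_last {A : Type} (l : list A) a : nth_error (l ++ [a]) (length l) = Some a.
Proof. rewrite nth_error_app2, Nat.sub_diag; reflexivity. Qed.

Lemma t_start_app {V : Type} (P Q : list (tedge V)) : P <> [] -> t_start (P ++ Q) = t_start P.
Proof. destruct P; simpl; congruence. Qed.

Lemma t_end_snoc {V : Type} (P : list (tedge V)) e : t_end (P ++ [e]) = etime e.
Proof.
  induction P as [|a P IH]; simpl; auto.
  destruct P; simpl in *; auto.
Qed.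

Lemma is_tpath_snoc {V : Type} (E : list (tedge V)) P : forall x y e,
  is_tpath E x y P -> In e E -> esrc e = y -> t_end P <= etime e ->
  is_tpath E x (etgt e) (P ++ [e]).
Proof.
  induction P as [|a P IH]; intros x y e HP HE Hsrc Hle; simpl in HP; [contradiction|].
  destruct P as [|b P].
  - destruct HP as (? & ? & ?). subst. simpl in *. repeat split; auto.
  - destruct HP as (? & ? & ? & HP). simpl. repeat split; auto.
    apply (IH _ _ e HP); auto.
Qed.

Lemma is_tpath_start_le_end {V : Type} (E : list (tedge V)) P : forall x y,
  is_tpath E x y P -> t_start P <= t_end P.
Proof.
  induction P as [|a P IH]; intros x y HP; simpl in HP; [contradiction|].
  destruct P as [|b P].
  - simpl. lra.
  - destruct HP as (? & ? & ? & HP). specialize (IH _ _ HP). simpl in *. lra.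
Qed.

Lemma tree_path_app {V : Type} (l m : list (occurrence V)) i P :
  tree_path l i P -> tree_path (l ++ m) i P.
Proof.
  induction 1.
  - eapply tp_root; eauto. apply nth_error_app_l; eauto.
  - eapply tp_child; eauto. apply nth_error_app_l; eauto.
Qed.

Lemma tree_path_functional {V : Type} (l : list (occurrence V)) i P :
  tree_path l i P -> forall Q, tree_path l i Q -> P = Q.
Proof.
  induction 1 as [i o Hn Hp|i o p e P Hn Hp HP IH]; intros Q HQ;
    inversion HQ as [? o' Hn' Hp'|? o' p' e' Q' Hn' Hp' HQ']; subst.
  - reflexivity.
  - congruence.
  - congruence.
  - rewrite Hn in Hn'; injection Hn' as <-. rewrite Hp in Hp'; injection Hp' as <- <-.
    f_equal. apply IH; auto.
Qed.

Arguments tree_path_app {V l} m {i P}.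
Arguments tree_path_functional {V l i P}.


Inductive ancestor {V : Type} (l : list (occurrence V)) (a : nat) : nat -> Prop :=
| anc_refl : ancestor l a a
| anc_step : forall c o p e, nth_error l c = Some o -> o_parent o = Some (p, e) ->
    ancestor l a p -> ancestor l a c.

Lemma ancestor_app {V : Type} (l m : list (occurrence V)) a c :
  ancestor l a c -> ancestor (l ++ m) a c.
Proof.
  induction 1; [constructor|]. eapply anc_step; eauto. apply nth_error_app_l; eauto.
Qed.

Lemma ancestor_start {V : Type} (l : list (occurrence V)) a c : ancestor l a c ->
  forall {Pa Pc}, tree_path l a Pa -> tree_path l c Pc ->
  Pa <> [] -> Pc <> [] /\ t_start Pc = t_start Pa.
Proof.
  induction 1 as [|c o p e Hn Hp Ha IH]; intros Pa Pc HA HC Hne.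
  - rewrite (tree_path_functional HC _ HA). auto.
  - inversion HC as [? o' Hn' Hp'|? o' p' e' Pp Hn' Hp' HPp]; subst; [congruence|].
    rewrite Hn in Hn'; injection Hn' as <-. rewrite Hp in Hp'; injection Hp' as <- <-.
    destruct (IH _ _ HA HPp Hne) as [Hnp Hs]. split.
    + destruct Pp; simpl; congruence.
    + rewrite t_start_app; auto.
Qed.

Arguments ancestor_start {V l a c} _ {Pa Pc}.
Section Invariant.
Context {V : Type} (E : list (tedge V)) (s : V) (ts : R).

Definition root_occ : occurrence V := mkOcc s ts None.

(* Start time of a tree branch; the empty branch of the root "starts" at the
   time t of the edge about to leave it. *)
Definition tree_start (P : list (tedge V)) (t : R) : R :=
  match P with [] => t | e :: _ => etime e end.

Definition reached (nodes : list (occurrence V)) (y : V) (a b : R) : Prop :=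
  y = s \/ exists j o P, nth_error nodes j = Some o /\ o_vtx o = y /\ o_label o <= b /\
     tree_path nodes j P /\ P <> [] /\ a <= t_start P.

Definition finished (st : dfs_state V) (o : occurrence V) : Prop :=
  forall e, In e E -> esrc e = o_vtx o -> o_label o <= etime e -> In e (st_trav st).

Record Inv (st : dfs_state V) : Prop := {
  inv_root : nth_error (st_nodes st) 0 = Some root_occ;
  inv_nodes : forall i o, nth_error (st_nodes st) i = Some o ->
     ts <= o_label o /\
     match o_parent o with
     | None => i = 0%nat
     | Some (p, e) => (p < i)%nat /\ In e E /\ etgt e = o_vtx o /\ etime e = o_label o /\
          o_vtx o <> s /\
          exists op, nth_error (st_nodes st) p = Some op /\ esrc e = o_vtx op /\
            o_label op <= etime e
     end;
  inv_paths : forall i o, nth_error (st_nodes st) i = Some o ->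
     exists P, tree_path (st_nodes st) i P;
  inv_finished : forall i o, nth_error (st_nodes st) i = Some o ->
     finished st o \/ ancestor (st_nodes st) i (st_cur st);
  (* root edges are used in decreasing order of time *)
  inv_root_edges : forall e, In e E -> ~ In e (st_trav st) -> esrc e = s -> ts <= etime e ->
     forall i P, tree_path (st_nodes st) i P -> P <> [] -> etime e <= t_start P;
  inv_cur_first : forall Pc, tree_path (st_nodes st) (st_cur st) Pc -> Pc <> [] ->
     forall i P, tree_path (st_nodes st) i P -> P <> [] -> t_start Pc <= t_start P;
  inv_sigma_s : st_sigma st s = Some ts;
  inv_sigma : forall x r, st_sigma st x = Some r -> x <> s ->
     exists j o P, nth_error (st_nodes st) j = Some o /\ o_vtx o = x /\ o_label o = r /\
       tree_path (st_nodes st) j P /\ P <> [];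
  inv_traversed : forall e, In e (st_trav st) ->
     (exists k o, nth_error (st_nodes st) k = Some o /\ o_vtx o = esrc e /\
        o_label o <= etime e) /\
     forall i o P, nth_error (st_nodes st) i = Some o -> o_vtx o = esrc e ->
       o_label o <= etime e -> tree_path (st_nodes st) i P ->
       reached (st_nodes st) (etgt e) (tree_start P (etime e)) (etime e)
}.
Arguments inv_root {st}. Arguments inv_nodes {st}. Arguments inv_paths {st}.
Arguments inv_finished {st}. Arguments inv_root_edges {st}. Arguments inv_cur_first {st}.
Arguments inv_sigma_s {st}. Arguments inv_sigma {st}. Arguments inv_traversed {st}.

Lemma tree_start_snoc (P : list (tedge V)) e : t_start (P ++ [e]) = tree_start P (etime e).
Proof. destruct P; reflexivity. Qed.

Lemma tree_start_nonnil (P : list (tedge V)) t : P <> [] -> tree_start P t = t_start P.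
Proof. destruct P; simpl; congruence. Qed.

Lemma reached_app nodes m y a b : reached nodes y a b -> reached (nodes ++ m) y a b.
Proof.
  intros [H|(j & o & P & H1 & H2 & H3 & H4 & H5 & H6)]; [left; auto|right].
  exists j, o, P; repeat split; auto. apply nth_error_app_l; auto. apply tree_path_app; auto.
Qed.

Lemma reached_weaken nodes y a a' b : a' <= a -> reached nodes y a b -> reached nodes y a' b.
Proof.
  intros Ha [H|(j & o & P & H1 & H2 & H3 & H4 & H5 & H6)]; [left; auto|right].
  exists j, o, P; repeat split; auto. lra.
Qed.

Lemma tree_path_temporal {st} : Inv st -> forall {i P}, tree_path (st_nodes st) i P ->
  forall {o}, nth_error (st_nodes st) i = Some o ->
  (P = [] /\ o = root_occ) \/
  (P <> [] /\ is_tpath E s (o_vtx o) P /\ t_end P = o_label o /\ o_vtx o <> s).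
Proof.
  intros HI i P H. induction H as [i o Hn Hp | i o p e P Hn Hp HP IH]; intros o' Hn'.
  - rewrite Hn in Hn'; injection Hn' as <-. left. split; auto.
    destruct (inv_nodes HI _ _ Hn) as [_ Hm]. rewrite Hp in Hm. subst.
    rewrite (inv_root HI) in Hn. congruence.
  - rewrite Hn in Hn'; injection Hn' as <-. right.
    destruct (inv_nodes HI _ _ Hn) as [_ Hm]. rewrite Hp in Hm.
    destruct Hm as (_ & HE & Ht & Hl & Hs & op & Hop & Hsrc & Hle).
    split; [destruct P; simpl; congruence|].
    rewrite t_end_snoc. split; [|split; auto].
    rewrite <- Ht. destruct (IH op Hop) as [[-> ->]|(_ & Htp & Hte & _)].
    + simpl. simpl in Hsrc. auto.
    + eapply is_tpath_snoc; eauto. lra.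
Qed.

Lemma ancestor_tree_start {st} : Inv st -> forall i c Pi Pc oi oc t,
  ancestor (st_nodes st) i c ->
  tree_path (st_nodes st) i Pi -> tree_path (st_nodes st) c Pc ->
  nth_error (st_nodes st) i = Some oi -> nth_error (st_nodes st) c = Some oc ->
  o_vtx oi = o_vtx oc -> tree_start Pi t = tree_start Pc t.
Proof.
  intros HI i c Pi Pc oi oc t Ha Hi Hc Hni Hnc Hv.
  destruct Pi as [|ei Pi'] eqn:EPi.
  - destruct (tree_path_temporal HI Hi Hni) as [[_ ->]|(H & _)]; [|congruence].
    destruct (tree_path_temporal HI Hc Hnc) as [[-> _]|(_ & _ & _ & Hs)]; auto.
    simpl in Hv. congruence.
  - rewrite <- EPi in *. destruct (ancestor_start Ha Hi Hc) as [Hne Hs]; [subst; discriminate|].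
    rewrite !tree_start_nonnil; auto. subst; discriminate.
Qed.

Lemma blocked_finished st o :
  (forall e', ~ available E st (o_vtx o) (o_label o) e') -> finished st o.
Proof.
  intros H e H1 H2 H3. apply NNPP. intro Hn. apply (H e). unfold available. tauto.
Qed.

Lemma available_tree_start st o e Pc j Pj : Inv st ->
  nth_error (st_nodes st) (st_cur st) = Some o ->
  available E st (o_vtx o) (o_label o) e -> tree_path (st_nodes st) (st_cur st) Pc ->
  tree_path (st_nodes st) j Pj -> Pj <> [] -> tree_start Pc (etime e) <= t_start Pj.
Proof.
  intros HI Ho (HE & Hnt & Hsrc & Hle) HPc HPj Hne.
  destruct (tree_path_temporal HI HPc Ho) as [[-> ->]|(Hn & _)].
  - simpl in *. eapply (inv_root_edges HI); eauto.
  - rewrite tree_start_nonnil; auto. eapply (inv_cur_first HI); eauto.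
Qed.

Lemma available_not_finished st oc o e :
  available E st (o_vtx oc) (o_label oc) e -> finished st o ->
  o_vtx o = o_vtx oc -> o_label o <= etime e -> False.
Proof.
  intros (HE & Hnt & Hsrc & _) Hfin Hv Hl. apply Hnt, Hfin; congruence.
Qed.

(* The graph has no self-loops; otherwise a new occurrence could be the source
   of its own tree edge, which [new_edge_reflected] excludes. *)
Hypothesis no_loops : forall e, In e E -> esrc e <> etgt e.

Section NewOccurrence.
Variables (st : dfs_state V) (o : occurrence V) (e : tedge V) (sigma' : V -> option R)
  (Pc : list (tedge V)).
Hypothesis HI : Inv st.
Hypothesis Hcur : nth_error (st_nodes st) (st_cur st) = Some o.
Hypothesis HPc : tree_path (st_nodes st) (st_cur st) Pc.
Hypothesis Hav : available E st (o_vtx o) (o_label o) e.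
Hypothesis Hmax : forall e', available E st (o_vtx o) (o_label o) e' -> etime e' <= etime e.
Hypothesis Hgt : sigma_gt (st_sigma st (etgt e)) (etime e).
Hypothesis Hsig_new : sigma' (etgt e) = Some (etime e).
Hypothesis Hsig_old : forall x, x <> etgt e -> sigma' x = st_sigma st x.

Let new_occ : occurrence V := mkOcc (etgt e) (etime e) (Some (st_cur st, e)).
Let nodes' : list (occurrence V) := st_nodes st ++ [new_occ].
Let new_idx : nat := length (st_nodes st).

(* The head of e is not s, since sigma(s) = ts is never exceeded. *)
Lemma new_target_not_source : etgt e <> s.
Proof.
  intro Heq. pose proof Hav as (_ & _ & _ & Hle).
  destruct (inv_nodes HI _ _ Hcur) as [Hlab _].
  rewrite Heq, (inv_sigma_s HI) in Hgt. simpl in Hgt. lra.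
Qed.

Lemma new_tree_path : tree_path nodes' new_idx (Pc ++ [e]).
Proof.
  eapply tp_child; [apply nth_error_snoc_last|reflexivity|]. apply tree_path_app; auto.
Qed.

Lemma tree_path_after_new i P : tree_path nodes' i P ->
  ((i < new_idx)%nat /\ tree_path (st_nodes st) i P) \/ (i = new_idx /\ P = Pc ++ [e]).
Proof.
  intros H.
  assert (Hi : exists o', nth_error nodes' i = Some o') by (inversion H; eauto).
  destruct Hi as [o' Hi].
  destruct (nth_error_snoc_inv _ _ _ _ Hi) as [Hold|[-> ->]].
  - left. split; [apply nth_error_Some; congruence|].
    destruct (inv_paths HI _ _ Hold) as [Q HQ].
    rewrite (tree_path_functional H _ (tree_path_app _ HQ)). auto.
  - right. split; auto. apply (tree_path_functional H). apply new_tree_path.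
Qed.

Lemma new_occ_not_old i o' : nth_error (st_nodes st) i = Some o' -> i <> new_idx.
Proof.
  intros H ->. assert (Hn : nth_error (st_nodes st) new_idx = None)
    by (apply nth_error_None; unfold new_idx; lia).
  congruence.
Qed.

Lemma new_starts_first i P : tree_path nodes' i P -> P <> [] ->
  tree_start Pc (etime e) <= t_start P.
Proof.
  intros H Hne. destruct (tree_path_after_new _ _ H) as [[_ H']|[_ ->]].
  - eapply available_tree_start; eauto.
  - rewrite tree_start_snoc. lra.
Qed.

Lemma new_nodes_shape i o' : nth_error nodes' i = Some o' ->
  ts <= o_label o' /\
  match o_parent o' with
  | None => i = 0%nat
  | Some (p, e') => (p < i)%nat /\ In e' E /\ etgt e' = o_vtx o' /\ etime e' = o_label o' /\
       o_vtx o' <> s /\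
       exists op, nth_error nodes' p = Some op /\ esrc e' = o_vtx op /\ o_label op <= etime e'
  end.
Proof.
  intros H. destruct (nth_error_snoc_inv _ _ _ _ H) as [Hold|[-> ->]].
  - destruct (inv_nodes HI _ _ Hold) as [Hl Hm]. split; auto.
    destruct (o_parent o') as [[p e']|]; auto.
    destruct Hm as (? & ? & ? & ? & ? & op & Hop & ? & ?). repeat split; auto.
    exists op; repeat split; auto. apply nth_error_app_l; auto.
  - pose proof Hav as (HE & _ & Hsrc & Hle). destruct (inv_nodes HI _ _ Hcur) as [Hlab _].
    simpl. split; [lra|]. repeat split; auto using new_target_not_source.
    + apply nth_error_Some; congruence.
    + exists o; repeat split; auto. apply nth_error_app_l; auto.
Qed.

(* Root edges still untraversed are no later than e, by the choice of e as
   the latest available edge (when the current occurrence is the root). *)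
Lemma new_root_edges e' : In e' E -> ~ In e' (e :: st_trav st) -> esrc e' = s -> ts <= etime e' ->
  forall i P, tree_path nodes' i P -> P <> [] -> etime e' <= t_start P.
Proof.
  intros HE' Hnt' Hs' Ht' i P H Hne.
  assert (Hnt : ~ In e' (st_trav st)) by (intro; apply Hnt'; right; auto).
  destruct (tree_path_after_new _ _ H) as [[_ H']|[_ ->]].
  - apply (inv_root_edges HI e' HE') with i; auto.
  - rewrite tree_start_snoc. destruct Pc as [|a Pc'] eqn:EPc.
    + simpl. destruct (tree_path_temporal HI HPc Hcur) as [[_ ->]|[Hx _]]; [|congruence].
      apply Hmax. repeat split; auto.
    + rewrite <- EPc in *. rewrite tree_start_nonnil by (subst; discriminate).
      apply (inv_root_edges HI e' HE') with (st_cur st); auto. subst; discriminate.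
Qed.

Lemma new_sigma x r : sigma' x = Some r -> x <> s ->
  exists j o' P, nth_error nodes' j = Some o' /\ o_vtx o' = x /\ o_label o' = r /\
    tree_path nodes' j P /\ P <> [].
Proof.
  intros Hx Hxs. destruct (classic (x = etgt e)) as [->|Hne].
  - rewrite Hsig_new in Hx. injection Hx as <-. exists new_idx, new_occ, (Pc ++ [e]).
    split; [apply nth_error_snoc_last|]. repeat split; auto using new_tree_path.
    destruct Pc; discriminate.
  - rewrite Hsig_old in Hx by auto. destruct (inv_sigma HI _ _ Hx Hxs) as (j & o' & P & ? & ? & ? & ? & ?).
    exists j, o', P. repeat split; auto. apply nth_error_app_l; auto. apply tree_path_app; auto.
Qed.

Lemma new_edge_reflected i o' P : nth_error nodes' i = Some o' -> o_vtx o' = esrc e ->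
  o_label o' <= etime e -> tree_path nodes' i P ->
  reached nodes' (etgt e) (tree_start P (etime e)) (etime e).
Proof.
  intros H Hv Hl HP. pose proof Hav as (HE & _ & Hsrc & _).
  destruct (nth_error_snoc_inv _ _ _ _ H) as [Hold|[-> ->]].
  2:{ exfalso. simpl in Hv. apply (no_loops e HE). auto. }
  destruct (tree_path_after_new _ _ HP) as [[_ HP']|[Heq _]].
  2:{ exfalso. exact (new_occ_not_old _ _ Hold Heq). }
  destruct (inv_finished HI _ _ Hold) as [Hfin|Ha].
  { exfalso. eapply available_not_finished; eauto. congruence. }
  rewrite (ancestor_tree_start HI _ _ _ _ _ _ (etime e) Ha HP' HPc Hold Hcur) by congruence.
  right. exists new_idx, new_occ, (Pc ++ [e]).
  split; [apply nth_error_snoc_last|]. repeat split; auto using new_tree_path.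
  - simpl; lra.
  - destruct Pc; discriminate.
  - rewrite tree_start_snoc; lra.
Qed.

(* Previously traversed edges stay reflected; a new occurrence of their
   source is covered because its branch starts earliest. *)
Lemma old_edge_reflected e2 : In e2 (st_trav st) ->
  forall i o' P, nth_error nodes' i = Some o' -> o_vtx o' = esrc e2 ->
  o_label o' <= etime e2 -> tree_path nodes' i P ->
  reached nodes' (etgt e2) (tree_start P (etime e2)) (etime e2).
Proof.
  intros Hin i o' P H Hv Hl HP.
  destruct (inv_traversed HI _ Hin) as [[k [ok (Hk1 & Hk2 & Hk3)]] Hall].
  destruct (nth_error_snoc_inv _ _ _ _ H) as [Hold|[-> ->]].
  - destruct (tree_path_after_new _ _ HP) as [[_ HP']|[Heq _]].
    2:{ exfalso. exact (new_occ_not_old _ _ Hold Heq). }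
    apply reached_app. eapply Hall; eauto.
  - destruct (tree_path_after_new _ _ HP) as [[Hlt _]|[_ ->]]; [unfold new_idx in Hlt; lia|].
    destruct (inv_paths HI _ _ Hk1) as [Pk HPk].
    apply reached_app. eapply reached_weaken; [|eapply (Hall k ok Pk); eauto].
    destruct (tree_path_temporal HI HPk Hk1) as [[-> ->]|[Hkne _]].
    { exfalso. simpl in Hk2, Hv. apply new_target_not_source. congruence. }
    rewrite tree_start_nonnil by (destruct Pc; discriminate). rewrite tree_start_snoc.
    rewrite (tree_start_nonnil Pk) by auto. apply new_starts_first with k; auto.
    apply tree_path_app; auto.
Qed.

Lemma inv_new : Inv (mkState sigma' (e :: st_trav st) nodes' new_idx).
Proof.
  constructor; cbn [st_nodes st_cur st_trav st_sigma].
  - apply nth_error_app_l. exact (inv_root HI).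
  - exact new_nodes_shape.
  - intros i o' H. destruct (nth_error_snoc_inv _ _ _ _ H) as [Hold|[-> ->]].
    + destruct (inv_paths HI _ _ Hold) as [Q HQ]. exists Q. apply tree_path_app; auto.
    + exists (Pc ++ [e]). apply new_tree_path.
  - intros i o' H. destruct (nth_error_snoc_inv _ _ _ _ H) as [Hold|[-> ->]].
    + destruct (inv_finished HI _ _ Hold) as [Hfin|Ha].
      * left. intros e2 ? ? ?. right. apply Hfin; auto.
      * right. eapply anc_step; [apply nth_error_snoc_last|reflexivity|].
        apply ancestor_app; auto.
    + right. constructor.
  - exact new_root_edges.
  - intros Pn H Hne i P HP HPne. destruct (tree_path_after_new _ _ H) as [[Hlt _]|[_ ->]].
    + unfold new_idx in Hlt; lia.
    + rewrite tree_start_snoc. apply new_starts_first with i; auto.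
  - rewrite Hsig_old by (intro Heq; apply new_target_not_source; auto). exact (inv_sigma_s HI).
  - exact new_sigma.
  - intros e2 [<-|Hin].
    + split; [|exact new_edge_reflected].
      pose proof Hav as (_ & _ & Hsrc & Hle).
      exists (st_cur st), o. repeat split; auto. apply nth_error_app_l; auto.
    + split; [|exact (old_edge_reflected e2 Hin)].
      destruct (inv_traversed HI _ Hin) as [[k [ok (? & ? & ?)]] _].
      exists k, ok. repeat split; auto. apply nth_error_app_l; auto.
Qed.

End NewOccurrence.

(* A skipped edge is reflected by the occurrence that set sigma of its head. *)
Lemma inv_skip st o e :
  Inv st -> nth_error (st_nodes st) (st_cur st) = Some o ->
  available E st (o_vtx o) (o_label o) e ->
  ~ sigma_gt (st_sigma st (etgt e)) (etime e) ->
  Inv (mkState (st_sigma st) (e :: st_trav st) (st_nodes st) (st_cur st)).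
Proof.
  intros HI Hcur Hav Hng. pose proof Hav as (HE & Hnt & Hsrc & Hle).
  destruct (inv_paths HI _ _ Hcur) as [Pc HPc].
  constructor; cbn [st_nodes st_cur st_trav st_sigma]; try apply HI.
  - intros i o' H. destruct (inv_finished HI _ _ H) as [Hfin|Ha]; auto.
    left. intros e2 ? ? ?. right. apply Hfin; auto.
  - intros e' HE' Hnt'. apply (inv_root_edges HI e' HE'). intro; apply Hnt'; right; auto.
  - intros e2 [<-|Hin]; [|apply (inv_traversed HI _ Hin)].
    split; [exists (st_cur st), o; repeat split; auto|].
    intros i o' P H Hv Hl HP.
    destruct (inv_finished HI _ _ H) as [Hfin|Ha].
    { exfalso. eapply available_not_finished; eauto. congruence. }
    rewrite (ancestor_tree_start HI _ _ _ _ _ _ (etime e) Ha HP HPc H Hcur) by congruence.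
    destruct (st_sigma st (etgt e)) as [r|] eqn:Hsig; simpl in Hng; [|tauto].
    destruct (classic (etgt e = s)) as [Hys|Hys]; [left; auto|].
    destruct (inv_sigma HI _ _ Hsig Hys) as (j & oj & Pj & Hj1 & Hj2 & Hj3 & Hj4 & Hj5).
    right. exists j, oj, Pj. repeat split; auto.
    + lra.
    + eapply available_tree_start; eauto.
Qed.

(* Backtracking leaves an occurrence only once it is finished. *)
Lemma inv_back st o p e :
  Inv st -> nth_error (st_nodes st) (st_cur st) = Some o ->
  (forall e', ~ available E st (o_vtx o) (o_label o) e') ->
  o_parent o = Some (p, e) ->
  Inv (mkState (st_sigma st) (st_trav st) (st_nodes st) p).
Proof.
  intros HI Hcur Hna Hp.
  constructor; cbn [st_nodes st_cur st_trav st_sigma]; try apply HI.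
  - intros i o' H. destruct (inv_finished HI _ _ H) as [Hfin|Ha]; auto.
    inversion Ha as [|c oc p' e' Hc Hpc Hanc]; subst.
    + left. rewrite Hcur in H; injection H as <-. apply blocked_finished; auto.
    + rewrite Hcur in Hc; injection Hc as <-. rewrite Hp in Hpc; injection Hpc as <- <-. auto.
  - intros Pp HPp Hne i P HP HPne.
    assert (HPc : tree_path (st_nodes st) (st_cur st) (Pp ++ [e])) by (eapply tp_child; eauto).
    rewrite <- (t_start_app Pp [e]) by auto. eapply (inv_cur_first HI); eauto.
    destruct Pp; discriminate.
Qed.

Lemma inv_init st : dfs_init s ts st -> Inv st.
Proof.
  intros (Hss & Hsx & Htrav & Hnodes & Hcur).
  assert (Hn : forall i o, nth_error (st_nodes st) i = Some o -> i = 0%nat /\ o = root_occ).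
  { rewrite Hnodes. intros [|i] o H; simpl in H; [injection H; auto|destruct i; discriminate]. }
  assert (Htp : forall i P, tree_path (st_nodes st) i P -> P = []).
  { intros i P H. inversion H as [|? o' ? ? ? Ho Hp]; subst; auto.
    destruct (Hn _ _ Ho) as [-> ->]. discriminate. }
  constructor.
  - rewrite Hnodes; reflexivity.
  - intros i o H. destruct (Hn _ _ H) as [-> ->]. simpl. split; auto; lra.
  - intros i o H. destruct (Hn _ _ H) as [-> ->]. exists [].
    eapply tp_root; [rewrite Hnodes; reflexivity|reflexivity].
  - intros i o H. destruct (Hn _ _ H) as [-> ->]. right. rewrite Hcur. constructor.
  - intros e _ _ _ _ i P HP Hne. specialize (Htp _ _ HP). contradiction.
  - intros Pc HP Hne. specialize (Htp _ _ HP). contradiction.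
  - exact Hss.
  - intros x r Hx Hxs. rewrite (Hsx x Hxs) in Hx. discriminate.
  - intros e Hin. rewrite Htrav in Hin. destruct Hin.
Qed.

Lemma inv_steps st0 st : Inv st0 -> clos_refl_trans _ (dfs_step E) st0 st -> Inv st.
Proof.
  intros HI H. induction H as [x y Hs| x | x y z _ IH1 _ IH2]; auto.
  destruct Hs as [st o e sigma' Hcur Hav Hmax Hgt Hs1 Hs2|st o e Hcur Hav _ Hng|st o p e Hcur Hna Hp].
  - destruct (inv_paths HI _ _ Hcur) as [Pc HPc]. eapply inv_new; eauto.
  - eapply inv_skip; eauto.
  - eapply inv_back; eauto.
Qed.

Lemma terminal_finished st : Inv st -> dfs_terminal E st ->
  forall i o, nth_error (st_nodes st) i = Some o -> finished st o.
Proof.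
  intros HI (oc & Hoc & Hp & Hna) i o H.
  destruct (inv_finished HI _ _ H) as [Hfin|Ha]; auto.
  inversion Ha as [|c o' p e Hc Hpc _]; subst.
  - rewrite Hoc in H; injection H as <-. apply blocked_finished; auto.
  - rewrite Hoc in Hc; injection Hc as <-. congruence.
Qed.

Lemma reached_along_path st : Inv st ->
  (forall i o, nth_error (st_nodes st) i = Some o -> finished st o) ->
  forall Q x w, is_tpath E x w Q ->
  forall i o P, nth_error (st_nodes st) i = Some o -> o_vtx o = x ->
  o_label o <= t_start Q -> tree_path (st_nodes st) i P ->
  reached (st_nodes st) w (tree_start P (t_start Q)) (t_end Q).
Proof.
  intros HI Hall Q. induction Q as [|e Q IH]; intros x w HQ i o P Hn Hv Hl HP;
    simpl in HQ; [contradiction|].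
  destruct Q as [|e' Q].
  - destruct HQ as (HE & Hs & Ht). simpl in *.
    assert (Hin : In e (st_trav st)) by (apply (Hall _ _ Hn); auto; congruence).
    rewrite <- Ht. apply (proj2 (inv_traversed HI e Hin)) with i o; auto. congruence.
  - destruct HQ as (HE & Hs & Hle & HQ'). simpl t_start in *.
    assert (Hin : In e (st_trav st)) by (apply (Hall _ _ Hn); auto; congruence).
    assert (Hreach := proj2 (inv_traversed HI e Hin) i o P Hn ltac:(congruence) Hl HP).
    assert (Hstart : tree_start P (etime e) <= etime e).
    { destruct (tree_path_temporal HI HP Hn) as [[-> _]|(Hne & Htp & Hte & _)]; [simpl; lra|].
      rewrite tree_start_nonnil by auto. pose proof (is_tpath_start_le_end _ _ _ _ Htp). lra. }
    change (t_end (e :: e' :: Q)) with (t_end (e' :: Q)).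
    destruct Hreach as [Hys|(j & oj & Pj & Hj1 & Hj2 & Hj3 & Hj4 & Hj5 & Hj6)].
    + assert (Hroot : tree_path (st_nodes st) 0 [])
        by (eapply tp_root; [exact (inv_root HI)|reflexivity]).
      assert (Hts := proj1 (inv_nodes HI _ _ Hn)).
      assert (Hr := IH _ _ HQ' 0%nat root_occ [] (inv_root HI) ltac:(simpl; auto)
                       ltac:(simpl in *; lra) Hroot).
      eapply reached_weaken; [|exact Hr]. simpl in *. lra.
    + assert (Hr := IH _ _ HQ' j oj Pj Hj1 Hj2 ltac:(simpl; lra) Hj4).
      rewrite tree_start_nonnil in Hr by auto. eapply reached_weaken; [|exact Hr]. lra.
Qed.

Lemma window_path_dominated tx ty v st : dfs_run E s ts st -> ts <= tx -> v <> s ->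
  forall P', is_tpath E s v P' -> tx <= t_start P' -> t_end P' <= ty ->
  exists j Pj, in_window st v tx ty j Pj /\ t_end Pj - t_start Pj <= t_end P' - t_start P'.
Proof.
  intros (st0 & Hinit & Hrt & Hterm) Hsx Hvs P' HP' Hstart Hend.
  assert (HI : Inv st) by (eapply inv_steps; eauto; apply inv_init; auto).
  assert (Hroot : tree_path (st_nodes st) 0 [])
    by (eapply tp_root; [exact (inv_root HI)|reflexivity]).
  destruct (reached_along_path st HI (terminal_finished st HI Hterm) P' s v HP' 0%nat root_occ []
              (inv_root HI) eq_refl ltac:(simpl; lra) Hroot)
    as [Hv|(j & oj & Pj & Hj1 & Hj2 & Hj3 & Hj4 & Hj5 & Hj6)]; [contradiction|].
  simpl in Hj6.
  destruct (tree_path_temporal HI Hj4 Hj1) as [[? _]|(_ & _ & Hte & _)]; [contradiction|].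
  exists j, Pj. repeat split; eauto; lra.
Qed.

Lemma window_branch_temporal tx ty v st i P : dfs_run E s ts st -> v <> s ->
  in_window st v tx ty i P -> is_tpath E s v P.
Proof.
  intros (st0 & Hinit & Hrt & _) Hvs ((o & Ho & Hov) & HP & _).
  assert (HI : Inv st) by (eapply inv_steps; eauto; apply inv_init; auto).
  destruct (tree_path_temporal HI HP Ho) as [[_ ->]|(_ & Htp & _)].
  - simpl in Hov. congruence.
  - congruence.
Qed.

End Invariant.

Theorem mainTheorem9 (V : Type) (E : list (tedge V)) (s : V) (ts tx ty : R) (v : V)
  (st : dfs_state V) :
  NoDup E ->
  (forall e, In e E -> esrc e <> etgt e) ->
  dfs_run E s ts st ->
  tx <= ty -> ts <= tx -> v <> s ->
  (forall i P, in_window st v tx ty i P ->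
     (forall j Q, in_window st v tx ty j Q -> t_end P - t_start P <= t_end Q - t_start Q) ->
     is_tpath E s v P /\ tx <= t_start P /\ t_end P <= ty /\
     (forall P', is_tpath E s v P' -> tx <= t_start P' -> t_end P' <= ty ->
        t_end P - t_start P <= t_end P' - t_start P'))
  /\
  ((forall i P, ~ in_window st v tx ty i P) ->
     forall P', is_tpath E s v P' -> tx <= t_start P' -> t_end P' <= ty -> False).
Proof.
  intros _ Hloops Hrun _ Hsx Hvs. split.
  - intros i P Hwin Hmin.
    split; [exact (window_branch_temporal E s ts Hloops tx ty v st i P Hrun Hvs Hwin)|].
    destruct Hwin as (_ & _ & Hstart & Hend). repeat split; auto.
    intros P' HP' H1 H2.
    destruct (window_path_dominated E s ts Hloops tx ty v st Hrun Hsx Hvs P' HP' H1 H2)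
      as (j & Pj & Hjwin & Hfaster).
    specialize (Hmin j Pj Hjwin). lra.
  - intros Hempty P' HP' H1 H2.
    destruct (window_path_dominated E s ts Hloops tx ty v st Hrun Hsx Hvs P' HP' H1 H2)
      as (j & Pj & Hjwin & _).
    exact (Hempty j Pj Hjwin).
Qed.
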